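(* Let $\Delta:\mathbb N\to\mathbb N$ be a function, and let $\eta\in(0,1)$ and $C$ be constants such that for every $n\in\mathbb N$ there exist $\ell,m\in\mathbb N$ with $\ell+m\le\eta n+C$ and $\Delta(n)\le\Delta(\ell)+\Delta(m)$. Set $\alpha=\log(2)/\log(2/\eta)$. Then $\Delta(n)\preceq n^\alpha$.
   Context: For functions $f,g:\mathbb N\to\mathbb R_+$, write $g\preceq f$ if there is $C'>0$ with $g(n)\le f(C'n)$ for all sufficiently large $n$. *)

From Stdlib Require Import Reals.
Open Scope R_scope.

Definition preceq (g : nat -> R) (f : R -> R) : Prop :=
  exists Cp : R, 0 < Cp /\ exists N : nat, forall n : nat, (N <= n)%nat ->
    g n <= f (Cp * INR n).

(** Write [a] for the exponent; then [(2/eta)^a = 2] and [x ↦ x^a] is concave and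
    subadditive.  Beyond a threshold [N0] we prove [Delta k <= A (k^a - c^a)] with
    [c = C/eta] by strong induction on [k]: if both [l] and [m] of the splitting of
    [k] are beyond the threshold, concavity gives
    [l^a + m^a <= 2 ((eta k + C)/2)^a = (k + c)^a <= k^a + c^a], and the two
    subtracted copies of [c^a] absorb the one produced here; a piece below the
    threshold only costs the constant [K = max_{j<N0} Delta j], which the slack
    [k^a - (eta k + C)^a -> oo] pays for once [A >= 2K].  Hence
    [Delta n <= A n^a = (A^(1/a) n)^a]. *)

From Stdlib Require Import Reals Lra Lia.
Open Scope R_scope.

Lemma Rpower_pos x a : 0 < Rpower x a.
Proof. apply exp_pos. Qed.

Lemma Rpower_scale A x a :
  0 < A -> 0 < x -> a <> 0 -> A * Rpower x a = Rpower (Rpower A (1 / a) * x) a.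
Proof.
  intros HA Hx Ha.
  rewrite <- Rpower_mult_distr by (auto; apply Rpower_pos).
  rewrite Rpower_mult; replace (1 / a * a) with 1 by (field; auto).
  now rewrite Rpower_1.
Qed.

Lemma Rpower_lt_1 x a : 0 < x < 1 -> 0 < a -> Rpower x a < 1.
Proof.
  intros Hx Ha; unfold Rpower; rewrite <- exp_0; apply exp_increasing.
  assert (ln x < 0) by (rewrite <- ln_1; apply ln_increasing; lra).
  nra.
Qed.

Lemma ln_ratio_bounds eta : 0 < eta < 1 -> 0 < ln 2 / ln (2 / eta) < 1.
Proof.
  intros Heta.
  assert (0 < ln 2) by (rewrite <- ln_1; apply ln_increasing; lra).
  assert (2 < 2 / eta) by (apply Rmult_lt_reg_r with eta; [lra | field_simplify; lra]).
  assert (ln 2 < ln (2 / eta)) by (apply ln_increasing; lra).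
  split; [apply Rdiv_lt_0_compat; lra|].
  apply Rmult_lt_reg_r with (ln (2 / eta)); [lra | field_simplify; lra].
Qed.

Lemma Rpower_ln_ratio eta : 0 < eta < 1 -> Rpower (2 / eta) (ln 2 / ln (2 / eta)) = 2.
Proof.
  intros Heta; pose proof (ln_ratio_bounds eta Heta) as Hratio.
  unfold Rpower; replace (ln 2 / ln (2 / eta) * ln (2 / eta)) with (ln 2).
  - apply exp_ln; lra.
  - field; intros E; rewrite E, Rdiv_0_r in Hratio; lra.
Qed.

Section PowerInequalities.

Variable a : R.
Hypothesis a_bounds : 0 <= a <= 1.

Lemma Rpower_le_tangent u : 0 < u -> Rpower u a <= 1 + a * (u - 1).
Proof.
  intros Hu; unfold Rpower; set (s := ln u); set (w := exp (a * s)).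
  (* the tangent line of [exp] at [a s] lies below [exp]; evaluate it at [0] and [s] *)
  assert (tangent : forall z, w * (1 + (z - a * s)) <= exp z).
  { intro z; replace (exp z) with (w * exp (z - a * s))
      by (unfold w; rewrite <- exp_plus; f_equal; ring).
    apply Rmult_le_compat_l; [left; apply exp_pos | apply exp_ineq1_le]. }
  pose proof (tangent 0) as at0; rewrite exp_0 in at0.
  pose proof (tangent s) as ats; rewrite (exp_ln u Hu : exp s = u) in ats.
  assert (w = (1 - a) * (w * (1 + (0 - a * s))) + a * (w * (1 + (s - a * s))))
    as -> by ring.
  assert ((1 - a) * (w * (1 + (0 - a * s))) <= (1 - a) * 1)
    by (apply Rmult_le_compat_l; lra).
  assert (a * (w * (1 + (s - a * s))) <= a * u) by (apply Rmult_le_compat_l; lra).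
  lra.
Qed.

Lemma Rpower_midpoint_concave x y : 0 < x -> 0 < y ->
  Rpower x a + Rpower y a <= 2 * Rpower ((x + y) / 2) a.
Proof.
  intros Hx Hy; set (t := (x + y) / 2).
  assert (Ht : 0 < t) by (unfold t; lra).
  replace x with (t * (x / t)) at 1 by (field; lra).
  replace y with (t * (y / t)) at 1 by (field; lra).
  rewrite <- !Rpower_mult_distr by (auto; apply Rdiv_lt_0_compat; lra).
  pose proof (Rpower_le_tangent (x / t) ltac:(apply Rdiv_lt_0_compat; lra)).
  pose proof (Rpower_le_tangent (y / t) ltac:(apply Rdiv_lt_0_compat; lra)).
  pose proof (Rpower_pos t a).
  assert (Hsum : x / t + y / t = 2) by (unfold t; field; lra).
  assert (Hbound : Rpower t a * Rpower (x / t) a + Rpower t a * Rpower (y / t) a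
          <= Rpower t a * (2 + a * (x / t + y / t - 2))).
  { replace (Rpower t a * (2 + a * (x / t + y / t - 2))) with
      (Rpower t a * (1 + a * (x / t - 1)) + Rpower t a * (1 + a * (y / t - 1))) by ring.
    apply Rplus_le_compat; apply Rmult_le_compat_l; lra. }
  rewrite Hsum in Hbound; lra.
Qed.

Lemma Rpower_ge_id t : 0 < t <= 1 -> t <= Rpower t a.
Proof.
  intros Ht; unfold Rpower.
  assert (ln t <= 0).
  { destruct (Rle_lt_or_eq_dec _ _ (proj2 Ht)) as [Hlt | ->]; [|rewrite ln_1; lra].
    rewrite <- ln_1; left; apply ln_increasing; lra. }
  rewrite <- (exp_ln t) at 1 by lra.
  destruct (Req_dec (ln t) (a * ln t)) as [Heq | Hne]; [rewrite <- Heq; lra|].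
  assert (0 <= (1 - a) * - ln t) by (apply Rmult_le_pos; lra).
  left; apply exp_increasing; lra.
Qed.

Lemma Rpower_subadditive x y : 0 < x -> 0 <= y ->
  Rpower (x + y) a <= Rpower x a + Rpower y a.
Proof.
  intros Hx Hy; destruct (Rle_lt_or_eq_dec _ _ Hy) as [Hy' | <-].
  2: { rewrite Rplus_0_r; pose proof (Rpower_pos 0 a); lra. }
  assert (share : forall z, 0 < z <= x + y ->
            Rpower (x + y) a * (z / (x + y)) <= Rpower z a).
  { intros z Hz; replace z with ((x + y) * (z / (x + y))) at 2 by (field; lra).
    assert (0 < z / (x + y) <= 1).
    { split; [apply Rdiv_lt_0_compat; lra|].
      apply Rmult_le_reg_r with (x + y); [lra|]; field_simplify; lra. }
    rewrite <- Rpower_mult_distr by lra.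
    apply Rmult_le_compat_l; [left; apply Rpower_pos | now apply Rpower_ge_id]. }
  pose proof (share x ltac:(lra)); pose proof (share y ltac:(lra)).
  assert (Rpower (x + y) a * (x / (x + y)) + Rpower (x + y) a * (y / (x + y))
          = Rpower (x + y) a) by (field; lra).
  lra.
Qed.

End PowerInequalities.

Lemma eventually_Rpower_ge a B : 0 < a ->
  exists N : nat, forall n : nat, (N <= n)%nat -> B <= Rpower (INR n) a.
Proof.
  intros Ha; destruct (INR_unbounded (Rpower (Rabs B + 1) (1 / a))) as [N HN].
  exists N; intros n Hn; apply le_INR in Hn.
  assert (Rpower (Rpower (Rabs B + 1) (1 / a)) a = Rabs B + 1) as Eq.
  { rewrite Rpower_mult; replace (1 / a * a) with 1 by (field; lra).
    apply Rpower_1; pose proof (Rabs_pos B); lra. }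
  pose proof (Rle_abs B).
  assert (Rpower (Rpower (Rabs B + 1) (1 / a)) a <= Rpower (INR n) a)
    by (apply Rle_Rpower_l; [lra | split; [apply Rpower_pos | lra]]).
  lra.
Qed.

Lemma eventually_contracted_lt eta C : eta < 1 ->
  exists N : nat, forall n : nat, (N <= n)%nat -> eta * INR n + C < INR n.
Proof.
  intros Heta; destruct (INR_unbounded (C / (1 - eta))) as [N HN].
  exists N; intros n Hn; apply le_INR in Hn.
  apply Rmult_lt_compat_l with (r := 1 - eta) in HN; [|lra].
  replace ((1 - eta) * (C / (1 - eta))) with C in HN by (field; lra).
  nra.
Qed.

Lemma bounded_initial_segment (f : nat -> nat) (N : nat) :
  exists K : nat, forall k : nat, (k < N)%nat -> (f k <= K)%nat.
Proof.
  induction N as [|N [K HK]]; [exists 0%nat; lia|].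
  exists (Nat.max K (f N)); intros k Hk.
  destruct (Nat.eq_dec k N) as [-> | Hne]; [lia|].
  specialize (HK k ltac:(lia)); lia.
Qed.

Section SplittingRecursion.

Variables (Delta : nat -> nat) (eta C a : R).
Hypothesis eta_bounds : 0 < eta < 1.
Hypothesis C_ge0 : 0 <= C.
Hypothesis a_bounds : 0 <= a <= 1.
Hypothesis Rpower_two_div_eta : Rpower (2 / eta) a = 2.
Hypothesis Delta_split : forall n : nat, exists l m : nat,
  INR (l + m) <= eta * INR n + C /\ (Delta n <= Delta l + Delta m)%nat.

Let c := C / eta.

Lemma Rpower_sum_le k x y : 0 < x -> 0 < y -> 0 < k -> x + y <= eta * k + C ->
  Rpower x a + Rpower y a <= Rpower k a + Rpower c a.
Proof.
  intros Hx Hy Hk Hxy.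
  assert (Rpower ((x + y) / 2) a <= Rpower ((eta * k + C) / 2) a)
    by (apply Rle_Rpower_l; lra).
  assert (2 * Rpower ((eta * k + C) / 2) a = Rpower (k + c) a).
  { assert (0 < 2 / eta) by (apply Rdiv_lt_0_compat; lra).
    rewrite <- Rpower_two_div_eta at 1; rewrite Rpower_mult_distr by nra.
    f_equal; unfold c; field; lra. }
  pose proof (Rpower_midpoint_concave a a_bounds x y Hx Hy).
  pose proof (Rpower_subadditive a a_bounds k c Hk
                ltac:(unfold c, Rdiv; apply Rmult_le_pos;
                         [lra | left; apply Rinv_0_lt_compat; lra])).
  lra.
Qed.

Lemma Rpower_contracted_le k x : 0 < x -> 0 < k -> x <= eta * k + C ->
  Rpower x a <= Rpower eta a * Rpower k a + Rpower C a.
Proof.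
  intros Hx Hk Hxk; rewrite Rpower_mult_distr by lra.
  apply Rle_trans with (Rpower (eta * k + C) a); [apply Rle_Rpower_l; lra|].
  apply Rpower_subadditive; nra.
Qed.

Variables (N0 K : nat) (A : R).
Hypothesis Delta_initial_le : forall k : nat, (k < N0)%nat -> (Delta k <= K)%nat.
Hypothesis A_ge : 2 * INR K <= A.
Hypothesis threshold : forall n : nat, (N0 <= n)%nat ->
  eta * INR n + C < INR n /\
  Rpower C a + 1 <= (1 - Rpower eta a) * Rpower (INR n) a /\
  Rpower c a + 1 <= Rpower (INR n) a.

Let bound (k : nat) := A * (Rpower (INR k) a - Rpower c a).

Lemma threshold_pos n : (N0 <= n)%nat -> 0 < INR n.
Proof. intros Hn; destruct (threshold n Hn) as [? _]; nra. Qed.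

Lemma bound_large_large k l m : (N0 <= k)%nat -> (N0 <= l)%nat -> (N0 <= m)%nat ->
  INR l + INR m <= eta * INR k + C -> bound l + bound m <= bound k.
Proof.
  intros Hk Hl Hm Hlm; unfold bound.
  pose proof (Rpower_sum_le (INR k) (INR l) (INR m)
                (threshold_pos l Hl) (threshold_pos m Hm) (threshold_pos k Hk) Hlm).
  pose proof (pos_INR K); nra.
Qed.

Lemma bound_small_large k m : (N0 <= k)%nat -> (N0 <= m)%nat ->
  INR m <= eta * INR k + C -> INR K + bound m <= bound k.
Proof.
  intros Hk Hm Hmk; unfold bound; destruct (threshold k Hk) as [_ [Hslack _]].
  pose proof (Rpower_contracted_le (INR k) (INR m)
                (threshold_pos m Hm) (threshold_pos k Hk) Hmk).
  pose proof (pos_INR K); nra.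
Qed.

Lemma bound_small_small k : (N0 <= k)%nat -> INR K + INR K <= bound k.
Proof.
  intros Hk; unfold bound; destruct (threshold k Hk) as [_ [_ Hslack]].
  pose proof (pos_INR K); nra.
Qed.

Lemma Delta_le_bound k : (N0 <= k)%nat -> INR (Delta k) <= bound k.
Proof.
  induction k as [k IH] using Wf_nat.lt_wf_ind; intros Hk.
  destruct (Delta_split k) as (l & m & Hlm & Hsplit).
  destruct (threshold k Hk) as [Hcontract _].
  assert (Hlt : (l + m < k)%nat) by (apply INR_lt; lra).
  rewrite plus_INR in Hlm; apply le_INR in Hsplit; rewrite plus_INR in Hsplit.
  pose proof (pos_INR l); pose proof (pos_INR m).
  assert (small : forall j, (j < N0)%nat -> INR (Delta j) <= INR K)
    by (intros; apply le_INR; auto).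
  destruct (Compare_dec.le_lt_dec N0 l) as [Hl | Hl]; destruct (Compare_dec.le_lt_dec N0 m) as [Hm | Hm].
  - pose proof (IH l ltac:(lia) Hl); pose proof (IH m ltac:(lia) Hm).
    pose proof (bound_large_large k l m Hk Hl Hm Hlm); lra.
  - pose proof (IH l ltac:(lia) Hl); pose proof (small m Hm).
    pose proof (bound_small_large k l Hk Hl ltac:(lra)); lra.
  - pose proof (small l Hl); pose proof (IH m ltac:(lia) Hm).
    pose proof (bound_small_large k m Hk Hm ltac:(lra)); lra.
  - pose proof (small l Hl); pose proof (small m Hm).
    pose proof (bound_small_small k Hk); lra.
Qed.

Lemma Delta_le_Rpower n : (N0 <= n)%nat -> INR (Delta n) <= A * Rpower (INR n) a.
Proof.
  intros Hn; pose proof (Delta_le_bound n Hn); unfold bound in *.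
  pose proof (pos_INR K); pose proof (Rpower_pos c a); nra.
Qed.

End SplittingRecursion.

Theorem lemma4p3 (Delta : nat -> nat) (eta C : R) :
  0 < eta < 1 ->
  (forall n : nat, exists l m : nat,
      INR (l + m) <= eta * INR n + C /\ (Delta n <= Delta l + Delta m)%nat) ->
  preceq (fun n => INR (Delta n))
         (fun x => Rpower x (ln 2 / ln (2 / eta))).
Proof.
  intros Heta Hsplit; set (a := ln 2 / ln (2 / eta)).
  assert (Ha : 0 < a < 1) by apply (ln_ratio_bounds eta Heta).
  assert (Hetaa : Rpower eta a < 1) by (apply Rpower_lt_1; lra).
  assert (HC : 0 <= C).
  { destruct (Hsplit 0%nat) as (l & m & Hlm & _); pose proof (pos_INR (l + m)).
    simpl in Hlm; lra. }
  destruct (eventually_contracted_lt eta C) as [N1 H1]; [lra|].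
  destruct (eventually_Rpower_ge a ((Rpower C a + 1) / (1 - Rpower eta a))) as [N2 H2];
    [lra|].
  destruct (eventually_Rpower_ge a (Rpower (C / eta) a + 1)) as [N3 H3]; [lra|].
  set (N0 := Nat.max N1 (Nat.max N2 N3)).
  destruct (bounded_initial_segment Delta N0) as [K HK].
  assert (threshold : forall k, (N0 <= k)%nat ->
            eta * INR k + C < INR k /\
            Rpower C a + 1 <= (1 - Rpower eta a) * Rpower (INR k) a /\
            Rpower (C / eta) a + 1 <= Rpower (INR k) a).
  { intros k Hk; split; [apply H1; lia|]; split; [|apply H3; lia].
    pose proof (H2 k ltac:(lia)) as Hk2.
    apply Rmult_le_compat_l with (r := 1 - Rpower eta a) in Hk2; [|lra].
    replace ((1 - Rpower eta a) * ((Rpower C a + 1) / (1 - Rpower eta a)))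
      with (Rpower C a + 1) in Hk2 by (field; lra).
    exact Hk2. }
  assert (HA : 0 < 2 * INR K + 1) by (pose proof (pos_INR K); lra).
  exists (Rpower (2 * INR K + 1) (1 / a)); split; [apply Rpower_pos|].
  exists N0; intros n Hn.
  assert (0 < INR n) by (pose proof (threshold n Hn); nra).
  rewrite <- Rpower_scale by lra.
  apply (Delta_le_Rpower Delta eta C a Heta HC ltac:(lra) (Rpower_ln_ratio eta Heta)
           Hsplit N0 K); auto; lra.
Qed.
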